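(* Let $A$ be a Nakayama algebra of finite global dimension. Then the magnitude $m_A$ equals the number of simple $A$-modules of even projective dimension, and also equals the number of vertices lying on a cycle in the resolution quiver of $A$.
   Context: Nakayama algebras are connected finite-dimensional algebras over an algebraically closed field $K$ all of whose indecomposable modules are uniserial, given as bound quiver algebras on a linear quiver $0\to\cdots\to n-1$ or cyclic quiver $0\to\cdots\to n-1\to 0$ with admissible relations; the Kupisch series is $[c_0,\dots,c_{n-1}]$ with $c_i=\dim_K e_iA$. The Cartan matrix $\mathbf C_A$ has entries $\dim_K e_iAe_j$; for $A$ of finite global dimension it is invertible, and the magnitude $m_A$ is the sum of all entries of $\mathbf C_A^{-1}$. The resolution quiver of $A$ has vertex set $\mathbb Z/n\mathbb Z$ and an arrow $i\to j$ whenever $j\equiv i+c_i \pmod n$. *)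

(* A connected Nakayama algebra over an algebraically closed
   field is determined up to isomorphism by its quiver type and Kupisch series
   [c_0,...,c_{n-1}]; we encode A by (n, c) with c : nat -> nat (only the
   values c 0, ..., c (n-1) matter). Convention: the indecomposable projective
   P_i = e_i A is uniserial with composition factors S_i, S_{i+1}, ...,
   S_{i+c_i-1} (indices mod n), from top to socle. *)
From mathcomp Require Import all_boot all_order all_algebra.
Set Implicit Arguments.
Unset Strict Implicit.
Unset Printing Implicit Defensive.
Import GRing.Theory Num.Theory.
Local Open Scope ring_scope.

Definition linear_kupisch (n : nat) (c : nat -> nat) : Prop :=
  [/\ (0 < n)%N, c n.-1 = 1%N,
      (forall i, (i < n.-1)%N -> (2 <= c i)%N) &
      (forall i, (i.+1 < n)%N -> (c i <= (c i.+1).+1)%N)].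

Definition cyclic_kupisch (n : nat) (c : nat -> nat) : Prop :=
  (0 < n)%N /\
  (forall i, (i < n)%N -> (2 <= c i)%N /\ (c i <= (c (i.+1 %% n)%N).+1)%N).

Definition nakayama_kupisch (n : nat) (c : nat -> nat) : Prop :=
  linear_kupisch n c \/ cyclic_kupisch n c.

(* Uniserial module M(j,l): top S_j, length l (1 <= l <= c_j).
   Its projective cover is P_j and its first syzygy is M(j+l mod n, c_j - l)
   when l < c_j; it is projective when l = c_j.
   [has_pd n c j l d] : M(j,l) has projective dimension d. *)
Inductive has_pd (n : nat) (c : nat -> nat) : nat -> nat -> nat -> Prop :=
| pd_proj j l : l = c j -> has_pd n c j l 0
| pd_step j l d : (l < c j)%N -> has_pd n c ((j + l) %% n) (c j - l) d ->
    has_pd n c j l d.+1.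

Definition simple_pd (n : nat) (c : nat -> nat) (i d : nat) : Prop :=
  has_pd n c i 1 d.

Definition fin_gldim (n : nat) (c : nat -> nat) : Prop :=
  forall i, (i < n)%N -> exists d, simple_pd n c i d.

(* Cartan matrix: C i j = dim e_i A e_j = multiplicity of S_j in P_i. *)
Definition cartan (n : nat) (c : nat -> nat) : 'M[rat]_n :=
  \matrix_(i < n, j < n)
    (count (fun k => ((i + k) %% n)%N == (j : nat)) (iota 0 (c i)))%:R.

Definition magnitude (n : nat) (c : nat -> nat) : rat :=
  \sum_(i < n) \sum_(j < n) invmx (cartan n c) i j.

(* resolution quiver: arrow i -> i + c_i mod n *)
Definition res_map (n : nat) (c : nat -> nat) (i : nat) : nat := ((i + c i) %% n)%N.

Definition on_res_cycle (n : nat) (c : nat -> nat) (i : nat) : Prop :=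
  exists k, (0 < k)%N /\ iter k (res_map n c) i = i.

(* If the simple S_j has projective dimension d, the alternating sum of the
   unit vectors e_i of the projective covers P_i in its minimal resolution is
   an integral row vector w with w C = e_j whose entries sum to 1 if d is even
   and to 0 if d is odd.  So C is invertible, C^-1 is integral, and the row
   sums of C^-1 count the simples of even projective dimension.
   For the resolution quiver consider the coweighting y = 1 C^-1.  Along a
   cycle i -> i + c_i -> ... the projectives chain together, so the sum of the
   corresponding rows of C is the dimension vector of a module of length
   q n, namely q times the all-ones vector.  Hence y is 1/q times the vector of
   multiplicities of the cycle; integrality of y forces q = 1, so y is 1 on
   the cycle vertices and 0 elsewhere. *)
From mathcomp Require Import all_boot all_order all_algebra.
Set Implicit Arguments. Unset Strict Implicit. Unset Printing Implicit Defensive.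
Import GRing.Theory Num.Theory.
Local Open Scope ring_scope.

Lemma sumr_01_card (R : nzSemiRingType) (I : finType) (F : I -> R) :
  (forall i, F i = 0 \/ F i = 1) -> \sum_i F i = #|[set i | F i == 1]|%:R.
Proof.
move=> F01; rewrite -sumr_const [RHS]big_mkcond /=; apply: eq_bigr => i _.
by rewrite inE; case: (F01 i) => ->; rewrite ?eqxx // eq_sym oner_eq0.
Qed.

Lemma invn_int_eq1 (R : archiNumFieldType) q :
  (0 < q)%N -> (q%:R : R)^-1 \is a Num.int -> q = 1%N.
Proof.
move=> q_gt0 /norm_intr_ge1; rewrite invr_eq0 pnatr_eq0 -lt0n q_gt0 => /(_ isT).
rewrite ger0_norm ?invr_ge0 ?ler0n // invf_ge1 ?ltr0n // lern1 => q_le1.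
by apply/eqP; rewrite eqn_leq q_le1.
Qed.

Lemma fin_iter_cycle (T : finType) (f : T -> T) (x : T) :
  exists k, exists2 p, (0 < p)%N & iter p f (iter k f x) = iter k f x.
Proof.
have : ~~ uniq (traject f x #|T|.+1).
  apply/negP => /card_uniqP; rewrite size_traject => card_traject.
  by have := max_card (mem (traject f x #|T|.+1)); rewrite card_traject ltnn.
rewrite looping_uniq negbK => /trajectP [k k_lt iter_eq].
exists k, (#|T| - k)%N; first by rewrite subn_gt0.
by rewrite -iterD subnK ?(ltnW k_lt).
Qed.

Lemma sum_delta_row (R : nzSemiRingType) k (j : 'I_k) :
  \sum_m (delta_mx 0 j : 'rV[R]_k) 0 m = 1.
Proof.
rewrite (bigD1 j) //= big1 => [|m /negbTE m_neq]; rewrite mxE ?m_neq ?andbF //.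
by rewrite !eqxx addr0.
Qed.

Lemma has_pd_le n c j l d : has_pd n c j l d -> (l <= c j)%N.
Proof. by case=> [? ? -> | ? ? ? /ltnW]. Qed.

Section NakayamaCartan.
Variables (n : nat) (c : nat -> nat).
Local Notation N := n.+1.
Local Notation C := (cartan N c).

(* The dimension vector of the uniserial module M(j, l) of [has_pd]. *)
Definition dimv (j l : nat) : 'rV[rat]_N :=
  \row_(m < N) (count (fun k => (j + k) %% N == m)%N (iota 0 l))%:R.

Lemma row_cartan (i : 'I_N) : row i C = dimv i (c i).
Proof. by apply/rowP => m; rewrite !mxE. Qed.

Lemma dimv1 (j : 'I_N) : dimv j 1 = delta_mx 0 j.
Proof.
by apply/rowP => m; rewrite !mxE /= !addn0 modn_small // eq_sym.
Qed.

Lemma dimvD j a b : dimv j (a + b) = dimv j a + dimv ((j + a) %% N) b.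
Proof.
apply/rowP => m; rewrite !mxE iotaD count_cat natrD add0n.
congr (_ + _%:R); rewrite -{1}(addn0 a) iotaDl count_map.
by apply: eq_count => k /=; rewrite modnDml addnA.
Qed.

Lemma count_iota_mod j (m : 'I_N) :
  count (fun k => (j + k) %% N == m)%N (iota 0 N) = 1%N.
Proof.
set t := ((m + (N - j %% N)) %% N)%N.
have t_lt : (t < N)%N by rewrite ltn_pmod.
rewrite (@eq_in_count _ _ (pred1 t)) => [|k]; last first.
  rewrite mem_iota add0n /= -{1}(modn_small (ltn_ord m)) => k_lt.
  have -> : (m = j + t %[mod N])%N.
    have j_le : (j %% N <= N)%N by rewrite ltnW // ltn_pmod.
    by rewrite /t -modnDml modnDmr addnCA subnKC // modnDr.
  by rewrite eqn_modDl !modn_small.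
by rewrite count_uniq_mem ?iota_uniq // mem_iota add0n t_lt.
Qed.

Lemma dimv_mulN j q : dimv j (q * N) = q%:R *: const_mx 1.
Proof.
elim: q j => [|q IHq] j; first by apply/rowP => m; rewrite !mxE mul0r.
rewrite mulSn dimvD IHq mulrSr scalerDl scale1r addrC; congr (_ + _).
by apply/rowP => m; rewrite !mxE count_iota_mod.
Qed.

Lemma resolution_vector j l d : (j < N)%N -> has_pd N c j l d ->
  exists2 w : 'rV[rat]_N, w *m C = dimv j l &
    \sum_m w 0 m = (~~ odd d)%:R /\ forall m, w 0 m \is a Num.int.
Proof.
move=> j_lt pd_jl; elim: pd_jl j_lt => {j l d} [j l -> | j l d l_lt _ IHd] j_lt.
  exists (delta_mx 0 (Ordinal j_lt)); first by rewrite -rowE row_cartan.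
  by split=> [|m]; rewrite ?sum_delta_row // mxE natr_int.
have [w wC [w_sum w_int]] := IHd (ltn_pmod _ (ltn0Sn n)).
exists (delta_mx 0 (Ordinal j_lt) - w).
  by rewrite mulmxBl -rowE row_cartan wC -{1}(subnKC (ltnW l_lt)) dimvD addrK.
split=> [|m]; last by rewrite !mxE rpredB ?natr_int.
under eq_bigr => m _ do rewrite [_ 0 m]mxE [(- w) 0 m]mxE.
rewrite sumrB sum_delta_row w_sum /= negbK.
by case: (odd d); rewrite ?subr0 ?subrr.
Qed.

Hypothesis fin_gl : fin_gldim N c.

Lemma c_pos (i : 'I_N) : (0 < c i)%N.
Proof. by have [d /has_pd_le] := fin_gl (ltn_ord i). Qed.

Lemma cartan_unit : C \in unitmx.
Proof.
rewrite -row_full_unit -sub1mx; apply/row_subP => j.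
have [d /(resolution_vector (ltn_ord j)) [w wC _]] := fin_gl (ltn_ord j).
by rewrite row1 -dimv1 -wC submxMl.
Qed.

Lemma row_invmx_cartan (j : 'I_N) d : simple_pd N c j d ->
  \sum_m invmx C j m = (~~ odd d)%:R /\ forall m, invmx C j m \is a Num.int.
Proof.
move=> /(resolution_vector (ltn_ord j)) [w wC w_props].
have wE : row j (invmx C) = w by rewrite rowE -dimv1 -wC mulmxK ?cartan_unit.
have invC_w m : invmx C j m = w 0 m by rewrite -wE mxE.
by rewrite (eq_bigr _ (fun m _ => invC_w m)); split=> [|m]; rewrite ?invC_w;
  case: w_props.
Qed.

Lemma invmx_cartan_int i m : invmx C i m \is a Num.int.
Proof. by have [d /row_invmx_cartan [_]] := fin_gl (ltn_ord i); apply. Qed.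

Lemma row_sum_invmx_cartan01 (i : 'I_N) :
  \sum_m invmx C i m = 0 \/ \sum_m invmx C i m = 1.
Proof.
have [d /row_invmx_cartan [-> _]] := fin_gl (ltn_ord i).
by case: (odd d); [left | right].
Qed.

Lemma row_sum_invmx_cartan_eq1 (i : 'I_N) :
  \sum_m invmx C i m == 1 <-> exists d, simple_pd N c i d /\ ~~ odd d.
Proof.
split=> [|[d [/row_invmx_cartan [-> _] ->]]] //.
have [d pd_d] := fin_gl (ltn_ord i); have [-> _] := row_invmx_cartan pd_d.
move=> sum_eq1; exists d; split=> //; move: sum_eq1.
by case: (odd d); rewrite //= eq_sym oner_eq0.
Qed.

Definition coweighting : 'rV[rat]_N := const_mx 1 *m invmx C.

Lemma coweightingE m : coweighting 0 m = \sum_i invmx C i m.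
Proof. by rewrite !mxE; apply: eq_bigr => i _; rewrite mxE mul1r. Qed.

Lemma magnitude_coweighting : magnitude N c = \sum_m coweighting 0 m.
Proof.
by rewrite /magnitude exchange_big; apply: eq_bigr => m _; rewrite coweightingE.
Qed.

Lemma coweighting_int m : coweighting 0 m \is a Num.int.
Proof. by rewrite coweightingE rpred_sum // => i _; apply: invmx_cartan_int. Qed.

Definition res_next (i : 'I_N) : 'I_N :=
  Ordinal (ltn_pmod (i + c i) (ltn0Sn n)).

Lemma iter_res_next k (i : 'I_N) : iter k (res_map N c) i = iter k res_next i.
Proof. by elim: k => //= k ->. Qed.

Lemma on_res_cycleE (i : 'I_N) :
  on_res_cycle N c i <-> exists2 k, (0 < k)%N & iter k res_next i = i.
Proof.
rewrite /on_res_cycle; split=> [[k [k_gt0 cyc]] | [k k_gt0 cyc]]; exists k => //.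
  by apply: val_inj; rewrite /= -iter_res_next.
by rewrite iter_res_next cyc.
Qed.

Lemma res_traject_dimv (i : 'I_N) p :
  \sum_(x <- traject res_next i p) dimv x (c x) =
  dimv i (\sum_(x <- traject res_next i p) c x).
Proof.
elim: p i => [|p IHp] i; first by rewrite !big_nil; apply/rowP => m; rewrite !mxE.
by rewrite /= !big_cons IHp dimvD.
Qed.

Lemma res_traject_sum_mod (i : 'I_N) p :
  ((i + \sum_(x <- traject res_next i p) c x) %% N)%N = iter p res_next i.
Proof.
elim: p i => [|p IHp] i; first by rewrite big_nil addn0 modn_small.
by rewrite /= big_cons addnA -modnDml IHp -iterSr.
Qed.

Lemma coweighting_res_cycle (i : 'I_N) p : (0 < p)%N -> iter p res_next i = i ->
  exists2 q, (0 < q)%N & forall m,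
    coweighting 0 m = (count_mem m (traject res_next i p))%:R / q%:R.
Proof.
move=> p_gt0 cyc; set s := traject res_next i p.
have [q sum_s] : exists q, (\sum_(x <- s) c x = q * N)%N.
  exists ((\sum_(x <- s) c x) %/ N)%N; apply/esym/divnK.
  have := res_traject_sum_mod i p; rewrite cyc -{2}(modn_small (ltn_ord i)).
  by rewrite -{2}[val i]addn0 => /eqP; rewrite eqn_modDl mod0n.
have q_gt0 : (0 < q)%N.
  rewrite -(ltn_pmul2r (ltn0Sn n)) mul0n -sum_s /s.
  by case: p p_gt0 {cyc s sum_s} => // p _; rewrite big_cons addn_gt0 c_pos.
exists q => // m.
pose t : 'rV[rat]_N := \sum_(x <- s) delta_mx 0 x.
have tC : t *m C = q%:R *: const_mx 1.
  rewrite mulmx_suml; under eq_bigr => x _ do rewrite -rowE row_cartan.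
  by rewrite res_traject_dimv sum_s dimv_mulN.
have q_neq0 : (q%:R : rat) != 0 by rewrite pnatr_eq0 -lt0n.
have -> : coweighting = q%:R^-1 *: t.
  have ones_tC : const_mx 1 = q%:R^-1 *: (t *m C).
    by rewrite tC scalerA mulVf ?scale1r.
  by rewrite /coweighting ones_tC -scalemxAl mulmxK ?cartan_unit.
rewrite mxE summxE mulrC -sum1_count natr_sum; congr (_ * _).
rewrite [RHS]big_mkcond; apply: eq_bigr => x _.
by rewrite mxE eqxx /= eq_sym; case: (x == m).
Qed.

Lemma coweighting_on_cycle (m : 'I_N) :
  on_res_cycle N c m -> coweighting 0 m = 1.
Proof.
case/on_res_cycleE => k k_gt0 cyc_k.
have ex_p : exists p, (0 < p)%N && (iter p res_next m == m).
  by exists k; rewrite k_gt0 cyc_k eqxx.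
case: (ex_minnP ex_p) => p /andP[p_gt0 /eqP cyc] p_min.
have count1 : count_mem m (traject res_next m p) = 1%N.
  case: p p_gt0 cyc p_min => // p _ _ p_min.
  rewrite /= eqxx add1n; congr _.+1; apply/count_memPn/negP.
  move=> /trajectP [j j_lt /esym]; rewrite -iterSr => /eqP cyc_j.
  have := p_min j.+1; rewrite cyc_j andbT => /(_ isT).
  by rewrite ltnS leqNgt j_lt.
have [q q_gt0 cw] := coweighting_res_cycle p_gt0 cyc.
have := coweighting_int m; rewrite cw count1 mul1r => /(invn_int_eq1 q_gt0) q1.
by rewrite q1 invr1.
Qed.

Lemma coweighting_neq0_on_cycle (m : 'I_N) :
  coweighting 0 m != 0 -> on_res_cycle N c m.
Proof.
have [k [p p_gt0 cyc]] := fin_iter_cycle res_next ord0.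
have [q _ ->] := coweighting_res_cycle p_gt0 cyc.
move=> cw_neq0; have : m \in traject res_next (iter k res_next ord0) p.
  by apply: contraNT cw_neq0 => /count_memPn ->; rewrite mul0r eqxx.
case/trajectP => j _ ->; apply/on_res_cycleE; exists p => //.
by rewrite -iterD addnC iterD cyc.
Qed.

Lemma coweighting01 m : coweighting 0 m = 0 \/ coweighting 0 m = 1.
Proof.
by have [-> | /coweighting_neq0_on_cycle/coweighting_on_cycle ->] :=
  eqVneq (coweighting 0 m) 0; [left | right].
Qed.

Lemma coweighting_eq1 m : coweighting 0 m == 1 <-> on_res_cycle N c m.
Proof.
split=> [cw1 | /coweighting_on_cycle ->] //.
by apply: coweighting_neq0_on_cycle; rewrite (eqP cw1) oner_eq0.
Qed.

End NakayamaCartan.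

Theorem proposition4p2 (n : nat) (c : nat -> nat) :
  nakayama_kupisch n c -> fin_gldim n c ->
  cartan n c \in unitmx /\
  (exists E : {set 'I_n},
      (forall i : 'I_n, i \in E <-> exists d, simple_pd n c i d /\ ~~ odd d) /\
      magnitude n c = #|E|%:R) /\
  (exists V : {set 'I_n},
      (forall i : 'I_n, i \in V <-> on_res_cycle n c i) /\
      magnitude n c = #|V|%:R).
Proof.
case: n => [[[]|[]] // | n _ fin_gl].
split; first exact: cartan_unit.
split.
- exists [set i | \sum_j invmx (cartan n.+1 c) i j == 1]; split.
    by move=> i; rewrite inE; apply: row_sum_invmx_cartan_eq1.
  by apply: sumr_01_card => i; apply: row_sum_invmx_cartan01.
- exists [set m | coweighting n c 0 m == 1]; split.
    by move=> m; rewrite inE; apply: coweighting_eq1.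
  rewrite magnitude_coweighting; apply: sumr_01_card => m.
  exact: coweighting01.
Qed.
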